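(* Let $(Y,D)$ be binary random variables and $X_0,X_1$ observed random vectors. Consider the binary Roy model with $Y_0$ independent of $X_1$ conditionally on $X_0$ and $Y_1$ independent of $X_0$ conditionally on $X_1$. Fix $(x_0,x_1)$ in the support of $(X_0,X_1)$ and define (assumed well defined) $\underline q^0(x_0)=\inf\{\mathbb P(Y=1\mid X_0=x_0,X_1=\tilde x_1):\tilde x_1\in\mathrm{Supp}(X_1\mid X_0=x_0)\}$, $\underline q^1(x_1)=\inf\{\mathbb P(Y=1\mid X_0=\tilde x_0,X_1=x_1):\tilde x_0\in\mathrm{Supp}(X_0\mid X_1=x_1)\}$, $\bar q^0_{10}(x_0)=\sup\{\mathbb P(Y=1,D=0\mid X_0=x_0,X_1=\tilde x_1):\tilde x_1\in\mathrm{Supp}(X_1\mid X_0=x_0)\}$, $\bar q^1_{11}(x_1)=\sup\{\mathbb P(Y=1,D=1\mid X_0=\tilde x_0,X_1=x_1):\tilde x_0\in\mathrm{Supp}(X_0\mid X_1=x_1)\}$. Writing $\pi=\mathbb P(Y=1\mid X_0=x_0,X_1=x_1)$, sharp bounds for the conditional distributions of potential outcomes are $$\frac{\pi-\underline q^0(x_0)}{1-\underline q^0(x_0)}\le \mathbb P(Y_1=1\mid Y_0=0,X_0=x_0,X_1=x_1)\le \frac{\pi-\bar q^0_{10}(x_0)}{1-\bar q^0_{10}(x_0)},$$ $$\frac{\pi-\underline q^1(x_1)}{1-\underline q^1(x_1)}\le \mathbb P(Y_0=1\mid Y_1=0,X_0=x_0,X_1=x_1)\le \frac{\pi-\bar q^1_{11}(x_1)}{1-\bar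 q^1_{11}(x_1)}.$$
   Context: Binary Roy model: $Y_0,Y_1\in\{0,1\}$ unobserved potential outcomes, $Y=Y_1D+Y_0(1-D)$, and almost surely $Y_1>Y_0\Rightarrow D=1$, $Y_1<Y_0\Rightarrow D=0$. $X_d$ are sector-specific covariates entering $Y_d$ but not $Y_{1-d}$. Sharp means the bounds hold for every $(Y_0,Y_1)$ compatible with the model and the conditional distribution of $(Y,D)$ given $(X_0,X_1)$, and the endpoints are attained by such compatible $(Y_0,Y_1)$. Denominators are assumed nonzero. *)

From HB Require Import structures.
From mathcomp Require Import all_boot all_order all_algebra.
From mathcomp Require Import boolp classical_sets reals.
Set Implicit Arguments. Unset Strict Implicit. Unset Printing Implicit Defensive.
Import Order.TTheory GRing.Theory Num.Theory.
Local Open Scope ring_scope.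
Local Open Scope classical_set_scope.

(* A conditional law of the latent triple (Y0, Y1, D) given a covariate
   value: m y0 y1 d = P(Y0 = y0, Y1 = y1, D = d | X0 = x0, X1 = x1). *)
Definition tlaw (R : realType) := bool -> bool -> bool -> R.

Definition is_dist (R : realType) (m : tlaw R) : Prop :=
  (forall y0 y1 d, 0 <= m y0 y1 d) /\
  \sum_(y0 : bool) \sum_(y1 : bool) \sum_(d : bool) m y0 y1 d = 1.

Definition prob (R : realType) (m : tlaw R) (E : bool -> bool -> bool -> bool) : R :=
  \sum_(y0 : bool) \sum_(y1 : bool) \sum_(d : bool)
     (if E y0 y1 d then m y0 y1 d else 0).

Definition cprob (R : realType) (m : tlaw R) (E F : bool -> bool -> bool -> bool) : R :=
  prob m (fun y0 y1 d => E y0 y1 d && F y0 y1 d) / prob m F.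

Definition Yobs (y0 y1 d : bool) : bool := if d then y1 else y0.

(* Roy selection: a.s. (Y1 > Y0 => D = 1) and (Y1 < Y0 => D = 0) *)
Definition roy (R : realType) (m : tlaw R) : Prop :=
  forall y0 y1 d : bool,
    (((y0 < y1)%N && ~~ d) || ((y1 < y0)%N && d)) -> m y0 y1 d = 0.

(* Binary Roy model with sector-specific covariates on support S:
   r x0 x1 is the conditional law of (Y0,Y1,D) given (X0,X1)=(x0,x1);
   Y0 _||_ X1 | X0 and Y1 _||_ X0 | X1. *)
Definition roy_ci_model (R : realType) (X0 X1 : Type) (S : set (X0 * X1))
    (r : X0 -> X1 -> tlaw R) : Prop :=
  [/\ (forall x0 x1, S (x0, x1) -> is_dist (r x0 x1) /\ roy (r x0 x1)),
      (forall x0 x1 x1' (v : bool), S (x0, x1) -> S (x0, x1') ->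
          prob (r x0 x1) (fun y0 _ _ => y0 == v) =
          prob (r x0 x1') (fun y0 _ _ => y0 == v)) &
      (forall x0 x0' x1 (v : bool), S (x0, x1) -> S (x0', x1) ->
          prob (r x0 x1) (fun _ y1 _ => y1 == v) =
          prob (r x0' x1) (fun _ y1 _ => y1 == v))].

Definition obs_equiv (R : realType) (X0 X1 : Type) (S : set (X0 * X1))
    (r0 r : X0 -> X1 -> tlaw R) : Prop :=
  forall x0 x1 (y d : bool), S (x0, x1) ->
    prob (r x0 x1) (fun a b c => (Yobs a b c == y) && (c == d)) =
    prob (r0 x0 x1) (fun a b c => (Yobs a b c == y) && (c == d)).

Definition compatible (R : realType) (X0 X1 : Type) (S : set (X0 * X1))
    (r0 r : X0 -> X1 -> tlaw R) : Prop :=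
  roy_ci_model S r /\ obs_equiv S r0 r.

Definition pY1 (R : realType) (m : tlaw R) : R :=
  prob m (fun a b c => Yobs a b c).
Definition pY1D0 (R : realType) (m : tlaw R) : R :=
  prob m (fun a b c => Yobs a b c && ~~ c).
Definition pY1D1 (R : realType) (m : tlaw R) : R :=
  prob m (fun a b c => Yobs a b c && c).

(* conditional supports as sections of the support S of (X0,X1) *)
Definition q0_low (R : realType) (X0 X1 : Type) (S : set (X0 * X1))
    (r0 : X0 -> X1 -> tlaw R) (x0 : X0) : R :=
  inf [set pY1 (r0 x0 t) | t in [set t | S (x0, t)]].
Definition q1_low (R : realType) (X0 X1 : Type) (S : set (X0 * X1))
    (r0 : X0 -> X1 -> tlaw R) (x1 : X1) : R :=
  inf [set pY1 (r0 t x1) | t in [set t | S (t, x1)]].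
Definition q0_10_up (R : realType) (X0 X1 : Type) (S : set (X0 * X1))
    (r0 : X0 -> X1 -> tlaw R) (x0 : X0) : R :=
  sup [set pY1D0 (r0 x0 t) | t in [set t | S (x0, t)]].
Definition q1_11_up (R : realType) (X0 X1 : Type) (S : set (X0 * X1))
    (r0 : X0 -> X1 -> tlaw R) (x1 : X1) : R :=
  sup [set pY1D1 (r0 t x1) | t in [set t | S (t, x1)]].

Definition pY1_given_Y0_0 (R : realType) (m : tlaw R) : R :=
  cprob m (fun _ y1 _ => y1) (fun y0 _ _ => ~~ y0).
Definition pY0_given_Y1_0 (R : realType) (m : tlaw R) : R :=
  cprob m (fun y0 _ _ => y0) (fun _ y1 _ => ~~ y1).

(* Under the Roy selection rule the cells (Y0,Y1,D) = (1,0,1) and (0,1,0) are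
   empty.  Hence, writing p = P(Y0 = 1), every law satisfies
   P(Y=1, D=0) <= p <= P(Y=1) and P(Y1 = 1 | Y0 = 0) = (P(Y=1) - p) / (1 - p).
   As P(Y0 = 1 | X0, X1) does not depend on X1, p lies between the sup of
   P(Y=1, D=0) and the inf of P(Y=1) over the X1-section of the support, and
   the bounds follow because q |-> (pi - q) / (1 - q) is antitone.  Conversely
   every p in that interval is attained: on the whole X0-section, move the mass
   P(Y=1, D=1) between the cells (1,1,1) and (0,1,1); this changes neither the
   observed law nor the law of Y1.  The bounds on P(Y0 = 1 | Y1 = 0) are the
   mirror image under Y0 <-> Y1, D <-> 1 - D, X0 <-> X1. *)

From HB Require Import structures.
From mathcomp Require Import all_boot all_order all_algebra.
From mathcomp Require Import boolp classical_sets reals ring lra.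
Import Order.TTheory GRing.Theory Num.Theory.
Local Open Scope ring_scope.
Local Open Scope classical_set_scope.
Set Implicit Arguments. Unset Strict Implicit.

Definition margY0 (R : realType) (m : tlaw R) (v : bool) : R :=
  prob m (fun y0 _ _ => y0 == v).
Definition margY1 (R : realType) (m : tlaw R) (v : bool) : R :=
  prob m (fun _ y1 _ => y1 == v).
Definition pYD (R : realType) (m : tlaw R) (y d : bool) : R :=
  prob m (fun a b c => (Yobs a b c == y) && (c == d)).

Definition swap_law (R : realType) (m : tlaw R) : tlaw R :=
  fun y0 y1 d => m y1 y0 (~~ d).

Definition shift_Y0 (R : realType) (q : R) (m : tlaw R) : tlaw R :=
  fun y0 y1 d => if y1 && d then (if y0 then q - pY1D0 m else pY1 m - q)
                 else m y0 y1 d.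

Section Laws.
Variables (R : realType) (m : tlaw R).

Lemma pY1E : pY1 m = pYD m true false + pYD m true true.
Proof. by rewrite /pY1 /pYD /prob !big_bool /=; lra. Qed.

Lemma pY1D0E : pY1D0 m = pYD m true false.
Proof. by rewrite /pY1D0 /pYD /prob !big_bool /=; lra. Qed.

Lemma swap_lawK : swap_law (swap_law m) = m.
Proof.
by apply/funext => y0; apply/funext => y1; apply/funext => d; rewrite /swap_law negbK.
Qed.

Lemma pYD_swap y d : pYD (swap_law m) y d = pYD m y (~~ d).
Proof. by case: y; case: d; rewrite /pYD /swap_law /prob !big_bool /=; lra. Qed.

Lemma pY1_swap : pY1 (swap_law m) = pY1 m.
Proof. by rewrite /pY1 /swap_law /prob !big_bool /=; lra. Qed.

Lemma pY1D0_swap : pY1D0 (swap_law m) = pY1D1 m.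
Proof. by rewrite /pY1D0 /pY1D1 /swap_law /prob !big_bool /=; lra. Qed.

Lemma margY0_swap v : margY0 (swap_law m) v = margY1 m v.
Proof. by case: v; rewrite /margY0 /margY1 /swap_law /prob !big_bool /=; lra. Qed.

Lemma margY1_swap v : margY1 (swap_law m) v = margY0 m v.
Proof. by case: v; rewrite /margY0 /margY1 /swap_law /prob !big_bool /=; lra. Qed.

Lemma pY1_given_Y0_0_swap : pY1_given_Y0_0 (swap_law m) = pY0_given_Y1_0 m.
Proof.
rewrite /pY1_given_Y0_0 /pY0_given_Y1_0 /cprob /swap_law /prob !big_bool /=.
by congr (_ / _); lra.
Qed.

Lemma is_dist_swap : is_dist m -> is_dist (swap_law m).
Proof.
case=> ge0 sum1; split=> [y0 y1 d|]; first exact: ge0.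
by rewrite -sum1 /swap_law !big_bool /=; lra.
Qed.

Lemma roy_swap : roy m -> roy (swap_law m).
Proof. by move=> hr [] [] [] //= _; apply: hr. Qed.

Lemma pYD_shift_Y0 q y d : pYD (shift_Y0 q m) y d = pYD m y d.
Proof. by case: y; case: d; rewrite /pYD /shift_Y0 /pY1D0 /pY1 /prob !big_bool /=; lra. Qed.

Lemma margY1_shift_Y0 q v : margY1 (shift_Y0 q m) v = margY1 m v.
Proof. by case: v; rewrite /margY1 /shift_Y0 /pY1D0 /pY1 /prob !big_bool /=; lra. Qed.

Lemma roy_shift_Y0 q : roy m -> roy (shift_Y0 q m).
Proof. by move=> hr [] [] [] //= _; apply: hr. Qed.

Hypothesis m_dist : is_dist m.

Lemma margY0_false : margY0 m false = 1 - margY0 m true.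
Proof. by case: m_dist => _; rewrite /margY0 /prob !big_bool /=; lra. Qed.

Lemma pY1_le1 : pY1 m <= 1.
Proof.
case: m_dist => ge0; rewrite /pY1 /prob !big_bool /= => sum1.
by have := ge0 false false false; have := ge0 false false true;
   have := ge0 false true false; have := ge0 true false true; lra.
Qed.

Lemma is_dist_shift_Y0 q : pY1D0 m <= q <= pY1 m -> is_dist (shift_Y0 q m).
Proof.
case: m_dist => ge0 sum1 /andP[lo hi]; split.
  by move=> [] [] [] /=; rewrite /shift_Y0 //=; lra.
by rewrite -sum1 /shift_Y0 /pY1D0 /pY1 /prob !big_bool /=; lra.
Qed.

Hypothesis m_roy : roy m.

Lemma margY0_shift_Y0 q : margY0 (shift_Y0 q m) true = q.
Proof.
have := @m_roy true false true isT.
by rewrite /margY0 /shift_Y0 /pY1D0 /prob !big_bool /=; lra.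
Qed.

Lemma roy_margY0_between : pY1D0 m <= margY0 m true <= pY1 m.
Proof.
case: m_dist => ge0 _; have := @m_roy true false true isT.
have := ge0 true true true; have := ge0 false true true.
by rewrite /pY1D0 /margY0 /pY1 /prob !big_bool /=; lra.
Qed.

Lemma roy_pY1_given_Y0_0 :
  pY1_given_Y0_0 m = (pY1 m - margY0 m true) / (1 - margY0 m true).
Proof.
case: m_dist => _; have := @m_roy true false true isT; have := @m_roy false true false isT.
by rewrite /pY1_given_Y0_0 /cprob /pY1 /margY0 /prob !big_bool /= => ? ? ?; congr (_ / _); lra.
Qed.

End Laws.

Lemma ratio_antimono (R : realType) (p a q : R) : p <= 1 -> a <= q -> q < 1 ->
  (p - q) / (1 - q) <= (p - a) / (1 - a).
Proof.
move=> p_le1 aq q_lt1.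
have -> : (p - q) / (1 - q) = (p - a) / (1 - a) - (1 - p) * (q - a) / ((1 - a) * (1 - q)).
  by field; apply/andP; split; apply/eqP; lra.
by rewrite lerBlDr lerDl; apply: divr_ge0; apply: mulr_ge0; lra.
Qed.

Section Identification.
Variables (R : realType) (X0 X1 : Type) (S : set (X0 * X1)) (r0 : X0 -> X1 -> tlaw R).

Lemma compatible_refl : roy_ci_model S r0 -> compatible S r0 r0.
Proof. by []. Qed.

Section Compatible.
Variables (r : X0 -> X1 -> tlaw R).
Hypothesis hc : compatible S r0 r.

Lemma compatible_pY1 x0 x1 : S (x0, x1) -> pY1 (r x0 x1) = pY1 (r0 x0 x1).
Proof. by case: hc => _ ho hS; rewrite !pY1E; congr (_ + _); apply: ho. Qed.

Lemma compatible_pY1D0 x0 x1 : S (x0, x1) -> pY1D0 (r x0 x1) = pY1D0 (r0 x0 x1).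
Proof. by case: hc => _ ho hS; rewrite !pY1D0E; apply: ho. Qed.

Lemma compatible_pY1_given_Y0_0 x0 x1 : S (x0, x1) -> pY1_given_Y0_0 (r x0 x1) =
  (pY1 (r0 x0 x1) - margY0 (r x0 x1) true) / (1 - margY0 (r x0 x1) true).
Proof.
move=> hS; case: hc => -[hd _ _] _; have [r_dist r_roy] := hd _ _ hS.
by rewrite roy_pY1_given_Y0_0 // compatible_pY1.
Qed.

Lemma compatible_margY0_between x0 x1 t : S (x0, x1) -> S (x0, t) ->
  pY1D0 (r0 x0 t) <= margY0 (r x0 x1) true <= pY1 (r0 x0 t).
Proof.
move=> hS ht; case: (hc) => -[hd hci _] _; have [r_dist r_roy] := hd _ _ ht.
have -> : margY0 (r x0 x1) true = margY0 (r x0 t) true := hci _ _ _ true hS ht.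
rewrite -(compatible_pY1D0 ht) -(compatible_pY1 ht).
exact: roy_margY0_between.
Qed.

Lemma q0_bounds_margY0 x0 x1 : S (x0, x1) ->
  q0_10_up S r0 x0 <= margY0 (r x0 x1) true <= q0_low S r0 x0.
Proof.
move=> hS; apply/andP; split.
- apply: ge_sup; first by exists (pY1D0 (r0 x0 x1)), x1.
  by move=> _ [t ht <-]; case/andP: (compatible_margY0_between hS ht).
- apply: lb_le_inf; first by exists (pY1 (r0 x0 x1)), x1.
  by move=> _ [t ht <-]; case/andP: (compatible_margY0_between hS ht).
Qed.

End Compatible.

Lemma q0_band x0 t q : roy_ci_model S r0 -> S (x0, t) ->
  q0_10_up S r0 x0 <= q <= q0_low S r0 x0 -> pY1D0 (r0 x0 t) <= q <= pY1 (r0 x0 t).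
Proof.
move=> hm ht /andP[up_q q_low].
have between := compatible_margY0_between (compatible_refl hm) ht.
apply/andP; split.
- apply: le_trans up_q; apply: ub_le_sup; last by exists t.
  by exists (margY0 (r0 x0 t) true) => _ [t' ht' <-]; case/andP: (between _ ht').
- apply: le_trans q_low _; apply: ge_inf; last by exists t.
  by exists (margY0 (r0 x0 t) true) => _ [t' ht' <-]; case/andP: (between _ ht').
Qed.

Lemma exists_compatible_margY0 x0 q : roy_ci_model S r0 ->
  (forall t, S (x0, t) -> pY1D0 (r0 x0 t) <= q <= pY1 (r0 x0 t)) ->
  exists2 r, compatible S r0 r & forall t, S (x0, t) -> margY0 (r x0 t) true = q.
Proof.
move=> [hd hci0 hci1] band.
pose r a b := if `[< a = x0 >] then shift_Y0 q (r0 a b) else r0 a b.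
have r_x0 t : r x0 t = shift_Y0 q (r0 x0 t) by rewrite /r; case: asboolP.
have r_off a b : a <> x0 -> r a b = r0 a b by rewrite /r; case: asboolP.
have r_law a b : S (a, b) -> is_dist (r a b) /\ roy (r a b).
  move=> hab; have [ab_dist ab_roy] := hd _ _ hab.
  have [ax0|/r_off->] := pselect (a = x0); last by [].
  subst a; rewrite r_x0; split; [exact: is_dist_shift_Y0 (band _ hab) | exact: roy_shift_Y0].
have r_margY1 a b v : margY1 (r a b) v = margY1 (r0 a b) v.
  by have [->|/r_off->] := pselect (a = x0); rewrite ?r_x0 ?margY1_shift_Y0.
have r_pYD a b y d : pYD (r a b) y d = pYD (r0 a b) y d.
  by have [->|/r_off->] := pselect (a = x0); rewrite ?r_x0 ?pYD_shift_Y0.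
have r_margY0 t : S (x0, t) -> margY0 (r x0 t) true = q.
  by move=> ht; have [_ t_roy] := hd _ _ ht; rewrite r_x0 margY0_shift_Y0.
exists r => //; split; last by move=> a b y d _; apply: r_pYD.
split => //.
- move=> a b b' v hab hab'; change (margY0 (r a b) v = margY0 (r a b') v).
  have [ax0|ax0] := pselect (a = x0); last by rewrite !r_off //; apply: hci0.
  subst a; have [dist _] := r_law _ _ hab; have [dist' _] := r_law _ _ hab'.
  case: v; first by rewrite !r_margY0.
  by rewrite (margY0_false dist) (margY0_false dist') !r_margY0.
- move=> a a' b v hab hab'; change (margY1 (r a b) v = margY1 (r a' b) v).
  by rewrite !r_margY1; apply: hci1.
Qed.

Lemma pY1_given_Y0_0_sharp x0 x1 : roy_ci_model S r0 -> S (x0, x1) ->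
  1 - q0_low S r0 x0 != 0 ->
  [/\ forall r, compatible S r0 r ->
        (pY1 (r0 x0 x1) - q0_low S r0 x0) / (1 - q0_low S r0 x0)
          <= pY1_given_Y0_0 (r x0 x1)
          <= (pY1 (r0 x0 x1) - q0_10_up S r0 x0) / (1 - q0_10_up S r0 x0),
      exists2 r, compatible S r0 r & pY1_given_Y0_0 (r x0 x1) =
        (pY1 (r0 x0 x1) - q0_low S r0 x0) / (1 - q0_low S r0 x0) &
      exists2 r, compatible S r0 r & pY1_given_Y0_0 (r x0 x1) =
        (pY1 (r0 x0 x1) - q0_10_up S r0 x0) / (1 - q0_10_up S r0 x0)].
Proof.
move=> hm hS low_neq1.
have [hd _ _] := hm; have [dist _] := hd _ _ hS.
have pi_le1 := pY1_le1 dist.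
have /andP[up_le low_ge] := q0_bounds_margY0 (compatible_refl hm) hS.
have up_le_low := le_trans up_le low_ge.
have low_lt1 : q0_low S r0 x0 < 1.
  have /andP[_ low_le_pi] : pY1D0 (r0 x0 x1) <= q0_low S r0 x0 <= pY1 (r0 x0 x1).
    by apply: q0_band; rewrite ?up_le_low ?lexx.
  by rewrite lt_neqAle eq_sym -subr_eq0 low_neq1 (le_trans low_le_pi pi_le1).
have attain q : q0_10_up S r0 x0 <= q <= q0_low S r0 x0 ->
    exists2 r, compatible S r0 r & pY1_given_Y0_0 (r x0 x1) = (pY1 (r0 x0 x1) - q) / (1 - q).
  move=> hq; have [r hc r_q] := exists_compatible_margY0 hm (fun t ht => q0_band hm ht hq).
  by exists r; rewrite // compatible_pY1_given_Y0_0 // r_q.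
split.
- move=> r hc; have /andP[lo hi] := q0_bounds_margY0 hc hS.
  rewrite compatible_pY1_given_Y0_0 //; apply/andP; split.
    exact: ratio_antimono.
  by apply: ratio_antimono => //; apply: le_lt_trans low_lt1.
- by apply: attain; rewrite lexx up_le_low.
- by apply: attain; rewrite lexx up_le_low.
Qed.

End Identification.

Definition mirror_supp (X0 X1 : Type) (S : set (X0 * X1)) : set (X1 * X0) :=
  [set p | S (p.2, p.1)].
Definition mirror (R : realType) (X0 X1 : Type) (r : X0 -> X1 -> tlaw R) :
    X1 -> X0 -> tlaw R :=
  fun x1 x0 => swap_law (r x0 x1).

Lemma mirror_suppK (X0 X1 : Type) (S : set (X0 * X1)) : mirror_supp (mirror_supp S) = S.
Proof. by apply/funext => -[]. Qed.

Lemma mirrorK (R : realType) (X0 X1 : Type) (r : X0 -> X1 -> tlaw R) : mirror (mirror r) = r.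
Proof. by apply/funext => x0; apply/funext => x1; apply: swap_lawK. Qed.

Section Mirror.
Variables (R : realType) (X0 X1 : Type) (S : set (X0 * X1)) (r0 : X0 -> X1 -> tlaw R).

Lemma roy_ci_model_mirror (r : X0 -> X1 -> tlaw R) :
  roy_ci_model S r -> roy_ci_model (mirror_supp S) (mirror r).
Proof.
case=> hd hci0 hci1; split.
- by move=> x1 x0 /hd[m_dist m_roy]; split; [apply: is_dist_swap | apply: roy_swap].
- move=> x1 x0 x0' v h h'; change (margY0 (mirror r x1 x0) v = margY0 (mirror r x1 x0') v).
  by rewrite !margY0_swap; apply: hci1.
- move=> x1 x1' x0 v h h'; change (margY1 (mirror r x1 x0) v = margY1 (mirror r x1' x0) v).
  by rewrite !margY1_swap; apply: hci0.
Qed.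

Lemma compatible_mirror (r : X0 -> X1 -> tlaw R) : compatible S r0 r ->
  compatible (mirror_supp S) (mirror r0) (mirror r).
Proof.
case=> hm ho; split; first exact: roy_ci_model_mirror.
move=> x1 x0 y d h; change (pYD (mirror r x1 x0) y d = pYD (mirror r0 x1 x0) y d).
by rewrite !pYD_swap; apply: ho.
Qed.

Lemma q0_low_mirror x1 : q0_low (mirror_supp S) (mirror r0) x1 = q1_low S r0 x1.
Proof. by rewrite /q0_low /q1_low; congr inf; apply: eq_imagel => t _; apply: pY1_swap. Qed.

Lemma q0_10_up_mirror x1 : q0_10_up (mirror_supp S) (mirror r0) x1 = q1_11_up S r0 x1.
Proof. by rewrite /q0_10_up /q1_11_up; congr sup; apply: eq_imagel => t _; apply: pY1D0_swap. Qed.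

End Mirror.

Lemma compatible_unmirror (R : realType) (X0 X1 : Type) (S : set (X0 * X1))
    (r0 : X0 -> X1 -> tlaw R) (r : X1 -> X0 -> tlaw R) :
  compatible (mirror_supp S) (mirror r0) r -> compatible S r0 (mirror r).
Proof. by move/compatible_mirror; rewrite mirror_suppK mirrorK. Qed.

Lemma pY0_given_Y1_0_sharp (R : realType) (X0 X1 : Type) (S : set (X0 * X1))
    (r0 : X0 -> X1 -> tlaw R) x0 x1 : roy_ci_model S r0 -> S (x0, x1) ->
  1 - q1_low S r0 x1 != 0 ->
  [/\ forall r, compatible S r0 r ->
        (pY1 (r0 x0 x1) - q1_low S r0 x1) / (1 - q1_low S r0 x1)
          <= pY0_given_Y1_0 (r x0 x1)
          <= (pY1 (r0 x0 x1) - q1_11_up S r0 x1) / (1 - q1_11_up S r0 x1),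
      exists2 r, compatible S r0 r & pY0_given_Y1_0 (r x0 x1) =
        (pY1 (r0 x0 x1) - q1_low S r0 x1) / (1 - q1_low S r0 x1) &
      exists2 r, compatible S r0 r & pY0_given_Y1_0 (r x0 x1) =
        (pY1 (r0 x0 x1) - q1_11_up S r0 x1) / (1 - q1_11_up S r0 x1)].
Proof.
move=> hm hS low_neq1.
have := pY1_given_Y0_0_sharp (roy_ci_model_mirror hm) (x0 := x1) (x1 := x0) hS.
rewrite q0_low_mirror q0_10_up_mirror pY1_swap => /(_ low_neq1) [bounds low up].
have unmirror r : pY0_given_Y1_0 (mirror r x0 x1) = pY1_given_Y0_0 (r x1 x0).
  by rewrite -pY1_given_Y0_0_swap swap_lawK.
split.
- by move=> r /compatible_mirror/bounds; rewrite pY1_given_Y0_0_swap.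
- by case: low => r /compatible_unmirror hc e; exists (mirror r); rewrite // unmirror.
- by case: up => r /compatible_unmirror hc e; exists (mirror r); rewrite // unmirror.
Qed.

Theorem mainTheorem10 (R : realType) (X0 X1 : Type) (S : set (X0 * X1))
    (r0 : X0 -> X1 -> tlaw R) (x0 : X0) (x1 : X1) :
  roy_ci_model S r0 -> S (x0, x1) ->
  1 - q0_low S r0 x0 != 0 -> 1 - q0_10_up S r0 x0 != 0 ->
  1 - q1_low S r0 x1 != 0 -> 1 - q1_11_up S r0 x1 != 0 ->
  let pi := pY1 (r0 x0 x1) in
  let L0 := (pi - q0_low S r0 x0) / (1 - q0_low S r0 x0) in
  let U0 := (pi - q0_10_up S r0 x0) / (1 - q0_10_up S r0 x0) in
  let L1 := (pi - q1_low S r0 x1) / (1 - q1_low S r0 x1) in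
  let U1 := (pi - q1_11_up S r0 x1) / (1 - q1_11_up S r0 x1) in
  [/\ forall r, compatible S r0 r ->
        L0 <= pY1_given_Y0_0 (r x0 x1) <= U0 /\
        L1 <= pY0_given_Y1_0 (r x0 x1) <= U1,
      exists2 r, compatible S r0 r & pY1_given_Y0_0 (r x0 x1) = L0,
      exists2 r, compatible S r0 r & pY1_given_Y0_0 (r x0 x1) = U0,
      exists2 r, compatible S r0 r & pY0_given_Y1_0 (r x0 x1) = L1 &
      exists2 r, compatible S r0 r & pY0_given_Y1_0 (r x0 x1) = U1].
Proof.
(* The two remaining denominators are nonzero anyway: q0_10_up <= q0_low < 1,
   and likewise for q1. *)
move=> hm hS low0 _ low1 _ /=.
have [bounds0 low0_attained up0_attained] := pY1_given_Y0_0_sharp hm hS low0.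
have [bounds1 low1_attained up1_attained] := pY0_given_Y1_0_sharp hm hS low1.
by split=> // r hc; split; [apply: bounds0 | apply: bounds1].
Qed.
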